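(* Let $\mathcal M$ be a Hilbert space of $\mathcal Y$-valued functions on the unit ball $\mathbb B^d\subset\mathbb C^d$, and suppose there exist $T_1,\dots,T_d\in\mathcal L(\mathcal M)$ such that for every $f\in\mathcal M$ $$f(\boldsymbol\lambda)-f(0)=\sum_{j=1}^d\lambda_j(T_jf)(\boldsymbol\lambda)\ \ (\boldsymbol\lambda\in\mathbb B^d)\quad\text{and}\quad\sum_{j=1}^d\|T_jf\|^2_{\mathcal M}\le\|f\|^2_{\mathcal M}-\|f(0)\|^2_{\mathcal Y}.$$ Then $\mathcal M$ is isometrically equal to a space $\mathcal H(K^{\mathbf a}_{C,\mathbf A})$ for some contractive pair $(C,\mathbf A)$; consequently $\mathcal M$ is contractively included in the Arveson space $\mathcal H_{\mathcal Y}(k_d)$.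
   Context: For a Hilbert space $\mathcal X$, $C\in\mathcal L(\mathcal X,\mathcal Y)$, $\mathbf A=(A_1,\dots,A_d)\in\mathcal L(\mathcal X)^d$: $(C,\mathbf A)$ is contractive if $C^*C+\sum_jA_j^*A_j\le I$. $\mathcal F_d$: free semigroup of words on $\{1,\dots,d\}$, $\mathbf A^v=A_{i_N}\cdots A_{i_1}$; abelianization $\mathbf a\colon\mathcal F_d\to\mathbb Z^d_+$ counts letter occurrences; $|\mathbf n|=\sum n_k$, $\mathbf n!=\prod n_k!$, $\boldsymbol\lambda^{\mathbf n}=\prod\lambda_k^{n_k}$. Arveson space $\mathcal H_{\mathcal Y}(k_d)$: functions $\sum_{\mathbf n}f_{\mathbf n}\boldsymbol\lambda^{\mathbf n}$ on $\mathbb B^d$ with $\|f\|^2=\sum_{\mathbf n}\frac{\mathbf n!}{|\mathbf n|!}\|f_{\mathbf n}\|^2<\infty$. $\widehat{\mathcal O}^{\mathbf a}_{C,\mathbf A}x=\sum_{\mathbf n}\big(\sum_{v\in\mathbf a^{-1}(\mathbf n)}C\mathbf A^vx\big)\boldsymbol\lambda^{\mathbf n}=C(I-\sum_j\lambda_jA_j)^{-1}x$, $\mathcal G^{\mathbf a}_{C,\mathbf A}=(\widehat{\mathcal O}^{\mathbf a}_{C,\mathbf A})^*\widehat{\mathcal O}^{\mathbf a}_{C,\mathbf A}$, $Q^{\mathbf a}$ the orthogonal projection onto $(\operatorname{Ker}\mathcal G^{\mathbf a}_{C,\mathbf A})^\perp$; $\mathcal H(K^{\mathbf a}_{C,\mathbf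 A})$ is $\operatorname{Ran}\widehat{\mathcal O}^{\mathbf a}_{C,\mathbf A}$ with norm $\|\widehat{\mathcal O}^{\mathbf a}_{C,\mathbf A}x\|=\|Q^{\mathbf a}x\|_{\mathcal X}$ (the reproducing kernel Hilbert space with kernel $C(I-\sum\lambda_jA_j)^{-1}(I-\sum\overline{\zeta_j}A_j^* )^{-1}C^*$). Contractive inclusion: $\mathcal M\subseteq\mathcal H_{\mathcal Y}(k_d)$ and $\|f\|_{\mathcal H_{\mathcal Y}(k_d)}\le\|f\|_{\mathcal M}$. *)

From HB Require Import structures.
From mathcomp Require Import all_boot all_order all_algebra.
From mathcomp Require Import complex.
From mathcomp Require Import boolp classical_sets reals.
Set Implicit Arguments. Unset Strict Implicit. Unset Printing Implicit Defensive.
Import Order.TTheory GRing.Theory Num.Theory.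
Import ComplexField.
Local Open Scope ring_scope.

Definition csq {R : realType} (z : R[i]) : R := complex.Re (z * conjc z).

Record hilbert (R : realType) := Hilbert {
  hspace :> lmodType R[i];
  hdot : hspace -> hspace -> R[i];
  hdot_linear : forall (a : R[i]) (x y z : hspace),
      hdot (a *: x + y) z = a * hdot x z + hdot y z;
  hdot_sym : forall x y : hspace, hdot y x = conjc (hdot x y);
  hdot_ge0 : forall x : hspace, complex.Im (hdot x x) = 0 /\ 0 <= complex.Re (hdot x x);
  hdot_eq0 : forall x : hspace, hdot x x = 0 -> x = 0;
  hcomplete : forall u : nat -> hspace,
      (forall e : R, 0 < e -> exists N, forall m n, (N <= m)%N -> (N <= n)%N ->
          Num.sqrt (complex.Re (hdot (u m - u n) (u m - u n))) < e) ->
      exists l : hspace, forall e : R, 0 < e -> exists N, forall n, (N <= n)%N ->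
          Num.sqrt (complex.Re (hdot (u n - l) (u n - l))) < e
}.

Definition hnorm {R : realType} {H : hilbert R} (x : H) : R :=
  Num.sqrt (complex.Re (hdot x x)).

Definition bounded_linear {R : realType} {H1 H2 : hilbert R} (T : H1 -> H2) : Prop :=
  (forall (a : R[i]) (x y : H1), T (a *: x + y) = a *: T x + T y) /\
  (exists c : R, forall x : H1, hnorm (T x) <= c * hnorm x).

Definition cpoint (R : realType) (d : nat) := 'I_d -> R[i].
Definition in_ball {R : realType} {d : nat} (lam : cpoint R d) : Prop :=
  \sum_(j < d) csq (lam j) < 1.
Definition cpoint0 {R : realType} {d : nat} : cpoint R d := fun _ => 0.

(* (C, A) contractive: C^*C + sum_j A_j^* A_j <= I, written out as the
   quadratic-form inequality it means. *)
Definition contractive_pair {R : realType} {d : nat} {X Y : hilbert R}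
    (C : X -> Y) (A : 'I_d -> X -> X) : Prop :=
  forall x : X, hnorm (C x) ^+ 2 + \sum_(j < d) hnorm (A j x) ^+ 2 <= hnorm x ^+ 2.

(* (I - sum_j lam_j A_j)^{-1} x : the solution z of z - sum_j lam_j A_j z = x *)
Definition resolvent {R : realType} {d : nat} {X : hilbert R}
    (A : 'I_d -> X -> X) (lam : cpoint R d) (x : X) : X :=
  xget 0 [set z : X | z - \sum_(j < d) (lam j *: A j z) = x].

Definition obsO {R : realType} {d : nat} {X Y : hilbert R}
    (C : X -> Y) (A : 'I_d -> X -> X) (x : X) : cpoint R d -> Y :=
  fun lam => C (resolvent A lam x).

Definition kerO {R : realType} {d : nat} {X Y : hilbert R}
    (C : X -> Y) (A : 'I_d -> X -> X) : set X :=
  [set x | forall lam, in_ball lam -> obsO C A x lam = 0].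

(* orthogonal projection onto S^perp (S a closed subspace): the y with
   y perpendicular to S and x - y in S *)
Definition proj_perp {R : realType} {X : hilbert R} (S : set X) (x : X) : X :=
  xget 0 [set y : X | (forall k, S k -> hdot y k = 0) /\ S (x - y)].

(* Q^a : orthogonal projection onto (Ker G^a_{C,A})^perp = (Ker \hat O)^perp *)
Definition projQ {R : realType} {d : nat} {X Y : hilbert R}
    (C : X -> Y) (A : 'I_d -> X -> X) : X -> X :=
  proj_perp (kerO C A).

(* A Hilbert space M "of Y-valued functions on B^d": evaluation ev is linear
   and injective (elements are determined by their values on the ball). *)
Definition function_space {R : realType} {d : nat} {M Y : hilbert R}
    (ev : M -> cpoint R d -> Y) : Prop :=
  (forall (a : R[i]) (f g : M) lam, in_ball lam ->
      ev (a *: f + g) lam = a *: ev f lam + ev g lam) /\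
  (forall f g : M, (forall lam, in_ball lam -> ev f lam = ev g lam) -> f = g).

Definition isometrically_equal_HK {R : realType} {d : nat} {M X Y : hilbert R}
    (ev : M -> cpoint R d -> Y) (C : X -> Y) (A : 'I_d -> X -> X) : Prop :=
  (forall f : M, exists x : X, forall lam, in_ball lam -> ev f lam = obsO C A x lam) /\
  (forall x : X, exists f : M, forall lam, in_ball lam -> ev f lam = obsO C A x lam) /\
  (forall (f : M) (x : X), (forall lam, in_ball lam -> ev f lam = obsO C A x lam) ->
      hnorm f = hnorm (projQ C A x)).

Definition mindex (d : nat) := 'I_d -> nat.
Definition mabs {d} (n : mindex d) : nat := (\sum_(k < d) n k)%N.
Definition mfact {d} (n : mindex d) : nat := (\prod_(k < d) (n k)`!)%N.
Definition mpow {R : realType} {d} (lam : cpoint R d) (n : mindex d) : R[i] :=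
  \prod_(k < d) lam k ^+ n k.

Definition sum_deg_le {V : nmodType} (d N : nat) (F : mindex d -> V) : V :=
  \sum_(m : {ffun 'I_d -> 'I_N.+1} | (\sum_(k < d) (m k : nat) <= N)%N)
     F (fun k => nat_of_ord (m k)).

(* g(lam) = sum_n c_n lam^n  (convergence of the homogeneous expansion) *)
Definition power_series_at {R : realType} {d : nat} {Y : hilbert R}
    (c : mindex d -> Y) (lam : cpoint R d) (y : Y) : Prop :=
  forall e : R, 0 < e -> exists N0, forall N, (N0 <= N)%N ->
    hnorm (y - sum_deg_le N (fun n => mpow lam n *: c n)) < e.

(* partial sums of ||g||^2_{H(k_d)} = sum_n n!/|n|! ||c_n||^2 *)
Definition arveson_partial {R : realType} {d : nat} {Y : hilbert R}
    (c : mindex d -> Y) (N : nat) : R :=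
  sum_deg_le N (fun n => ((mfact n)%:R / ((mabs n)`!)%:R) * hnorm (c n) ^+ 2).

Definition contractively_included_arveson {R : realType} {d : nat} {M Y : hilbert R}
    (ev : M -> cpoint R d -> Y) : Prop :=
  forall f : M, exists c : mindex d -> Y,
    (forall lam, in_ball lam -> power_series_at c lam (ev f lam)) /\
    (forall N, arveson_partial c N <= hnorm f ^+ 2).

(* Take X = M, C f = f(0) and A = T.  The identity f(lam) - f(0) = sum_j lam_j (T_j f)(lam)
   says that f(lam) = C z whenever z - sum_j lam_j T_j z = f, and for lam in the ball this
   equation is solved by the Neumann series of the strict contraction sum_j lam_j T_j.  Hence
   the observability operator of (C, T) is the identity of M, its kernel is trivial, and M is
   H(K_{C,T}) isometrically.  Expanding the Neumann series over words v gives the Taylor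
   coefficients f_n = sum_{a(v) = n} C T^v f.  Cauchy-Schwarz over the |n|!/n! words of
   abelianization n bounds (n!/|n|!) |f_n|^2 by sum_{a(v) = n} |C T^v f|^2, and the inequality
   sum_j |T_j f|^2 <= |f|^2 - |f(0)|^2 telescopes to sum_v |C T^v f|^2 <= |f|^2. *)

From HB Require Import structures.
From mathcomp Require Import all_boot all_order all_algebra.
From mathcomp Require Import complex.
From mathcomp Require Import boolp classical_sets reals.
From mathcomp Require Import ring lra.
Import Order.TTheory GRing.Theory Num.Theory.
Import ComplexField.
Local Open Scope ring_scope.
Local Open Scope complex_scope.

Section ComplexModulus.
Context {R : realType}.
Implicit Types (a : R[i]) (t : R).

Definition cabs a : R := Num.sqrt (csq a).

Lemma csq_ge0 a : 0 <= csq a.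
Proof. by case: a => a1 a2; rewrite /csq /=; nra. Qed.

Lemma csq_real t : csq t%:C = t ^+ 2.
Proof. by rewrite /csq /=; ring. Qed.

Lemma sqr_cabs a : cabs a ^+ 2 = csq a.
Proof. by rewrite sqr_sqrtr // csq_ge0. Qed.

End ComplexModulus.

Section RealInequalities.
Context {R : realType}.

Lemma sum_mul_le_sqrt (I : Type) (r : seq I) (u v : I -> R) :
  \sum_(i <- r) u i * v i <=
  Num.sqrt (\sum_(i <- r) u i ^+ 2) * Num.sqrt (\sum_(i <- r) v i ^+ 2).
Proof.
have sqr_sum_ge0 (w : I -> R) : 0 <= \sum_(i <- r) w i ^+ 2.
  by apply: sumr_ge0 => i _; exact: sqr_ge0.
have null_sum (w w' : I -> R) : \sum_(i <- r) w i ^+ 2 = 0 ->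
    \sum_(i <- r) w i * w' i = 0.
  elim: r {sqr_sum_ge0} => [|i s IH]; first by rewrite !big_nil.
  rewrite !big_cons => /eqP; rewrite paddr_eq0 ?sqr_ge0 //; last first.
    by apply: sumr_ge0 => j _; exact: sqr_ge0.
  by case/andP; rewrite sqrf_eq0 => /eqP-> /eqP/IH->; rewrite mul0r addr0.
set A := \sum_(i <- r) u i ^+ 2; set B := \sum_(i <- r) v i ^+ 2.
set a := Num.sqrt A; set b := Num.sqrt B.
have [a0|a_neq0] := eqVneq a 0.
  by rewrite a0 mul0r null_sum // -(sqr_sqrtr (sqr_sum_ge0 u)) -/A -/a a0 expr0n.
have [b0|b_neq0] := eqVneq b 0.
  rewrite b0 mulr0 (eq_bigr (fun i => v i * u i)) => [|i _]; last exact: mulrC.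
  by rewrite null_sum // -(sqr_sqrtr (sqr_sum_ge0 v)) -/B -/b b0 expr0n.
have ab_gt0 : 0 < a * b by rewrite mulr_gt0 // lt_def ?a_neq0 ?b_neq0 sqrtr_ge0.
(* [0 <= sum (b u_i - a v_i)^2 = 2 a^2 b^2 - 2 a b sum u_i v_i] *)
have : 0 <= \sum_(i <- r) (b * u i - a * v i) ^+ 2 by exact: sqr_sum_ge0.
have -> : \sum_(i <- r) (b * u i - a * v i) ^+ 2 =
    b ^+ 2 * A + a ^+ 2 * B - 2 * (a * b) * \sum_(i <- r) u i * v i.
  rewrite !mulr_sumr -!big_split -sumrN -big_split /=.
  by apply: eq_bigr => i _; ring.
rewrite -[A](sqr_sqrtr (sqr_sum_ge0 u)) -[B](sqr_sqrtr (sqr_sum_ge0 v)) -/a -/b => h.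
by rewrite -(ler_pM2l ab_gt0); nra.
Qed.

Lemma bernoulli_ineq (h : R) n : 0 <= h -> 1 + n%:R * h <= (1 + h) ^+ n.
Proof.
move=> h_ge0; elim: n => [|n IH]; first by rewrite mul0r addr0 expr0.
have : 0 <= (1 + h) ^+ n by rewrite exprn_ge0 // addr_ge0.
have : 0 <= n%:R :> R by [].
by rewrite exprS -nat1r; nra.
Qed.

Lemma expr_lt_eventually {r e : R} : 0 <= r -> r < 1 -> 0 < e ->
  exists N, r ^+ N < e.
Proof.
move=> r_ge0 r_lt1 e_gt0; have [->|r_neq0] := eqVneq r 0.
  by exists 1%N; rewrite expr1.
have r_gt0 : 0 < r by rewrite lt_def r_neq0.
(* [r = 1 / (1 + h)] with [h > 0], and Bernoulli gives [r ^ N <= 1 / (N h)]. *)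
pose h := r^-1 - 1.
have h_gt0 : 0 < h by rewrite subr_gt0 invf_gt1.
have r1h : r * (1 + h) = 1 by rewrite addrC subrK mulfV.
have [N ltN] : exists N, (h * e)^-1 < N%:R.
  by exists (Num.Def.archi_bound (h * e)^-1); rewrite archi_boundP // invr_ge0 ltW // mulr_gt0.
exists N.
have rN_ge0 : 0 <= r ^+ N by rewrite exprn_ge0.
have rNh : r ^+ N * (1 + h) ^+ N = 1 by rewrite -exprMn r1h expr1n.
have Nhe : 1 < N%:R * (h * e).
  by rewrite -[(h * e)^-1]mul1r ltr_pdivrMr ?mulr_gt0 in ltN.
have := ler_wpM2l rN_ge0 (bernoulli_ineq h N (ltW h_gt0)).
by rewrite rNh; nra.
Qed.

Lemma geometric_eventually (c : R) {r e : R} : 0 <= r -> r < 1 -> 0 < e ->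
  exists N, forall n, (N <= n)%N -> c * r ^+ n < e.
Proof.
move=> r_ge0 r_lt1 e_gt0; have [c_le0|c_gt0] := lerP c 0.
  by exists 0%N => n _; rewrite (le_lt_trans _ e_gt0) // mulr_le0_ge0 ?exprn_ge0.
have [N rN] := expr_lt_eventually r_ge0 r_lt1 (divr_gt0 e_gt0 c_gt0).
exists N => n leNn; rewrite mulrC -ltr_pdivlMr //.
by rewrite (le_lt_trans _ rN) // ler_wiXn2l // ltW.
Qed.

End RealInequalities.

Section InnerProductSpace.
Context {R : realType} {H : hilbert R}.
Implicit Types (x y z : H) (a : R[i]).

Lemma hdotDl x y z : hdot (x + y) z = hdot x z + hdot y z.
Proof. by have := hdot_linear 1 x y z; rewrite scale1r mul1r. Qed.

Lemma hdot0l z : hdot 0 z = 0.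
Proof. by apply: (addrI (hdot 0 z)); rewrite -hdotDl !addr0. Qed.

Lemma hdotZl a x z : hdot (a *: x) z = a * hdot x z.
Proof. by rewrite -[a *: x]addr0 hdot_linear hdot0l addr0. Qed.

Lemma hdotNl x z : hdot (- x) z = - hdot x z.
Proof. by rewrite -scaleN1r hdotZl mulN1r. Qed.

Lemma hdotDr x y z : hdot x (y + z) = hdot x y + hdot x z.
Proof. by rewrite hdot_sym hdotDl rmorphD /= -!hdot_sym. Qed.

Lemma hdotZr a x y : hdot x (a *: y) = conjc a * hdot x y.
Proof. by rewrite hdot_sym hdotZl rmorphM /= -hdot_sym. Qed.

Lemma hdot0r z : hdot z 0 = 0.
Proof. by rewrite hdot_sym hdot0l conjc0. Qed.

Lemma hdotNr x z : hdot x (- z) = - hdot x z.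
Proof. by rewrite hdot_sym hdotNl rmorphN /= -hdot_sym. Qed.

Lemma hdot_self x : hdot x x = (complex.Re (hdot x x))%:C.
Proof. by have [] := hdot_ge0 x; case: (hdot x x) => a b /= ->. Qed.

Lemma hnorm_ge0 x : 0 <= hnorm x.
Proof. exact: sqrtr_ge0. Qed.

Lemma sqr_hnorm x : hnorm x ^+ 2 = complex.Re (hdot x x).
Proof. by rewrite sqr_sqrtr // (hdot_ge0 x).2. Qed.

Lemma hnorm0 : hnorm (0 : H) = 0.
Proof. by rewrite /hnorm hdot0l sqrtr0. Qed.

Lemma hnorm_eq0 {x} : hnorm x = 0 -> x = 0.
Proof. by move=> x0; apply: hdot_eq0; rewrite hdot_self -sqr_hnorm x0 expr0n. Qed.

Lemma hnormN x : hnorm (- x) = hnorm x.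
Proof. by rewrite /hnorm hdotNl hdotNr opprK. Qed.

Lemma hnormB x y : hnorm (x - y) = hnorm (y - x).
Proof. by rewrite -hnormN opprB. Qed.

Lemma hnormZ a x : hnorm (a *: x) = cabs a * hnorm x.
Proof.
rewrite /hnorm /cabs -sqrtrM ?csq_ge0 // hdotZl hdotZr hdot_self.
by case: a => a1 a2; rewrite /csq /=; congr Num.sqrt; ring.
Qed.

Lemma sqr_hnormD x y :
  hnorm (x + y) ^+ 2 = hnorm x ^+ 2 + hnorm y ^+ 2 + 2 * complex.Re (hdot x y).
Proof.
rewrite !sqr_hnorm hdotDl !hdotDr !raddfD /= (hdot_sym x y).
by case: (hdot x y) => a b /=; ring.
Qed.

(* Expanding [0 <= |b x - a y|^2] with [a = |x|], [b = |y|] gives [ab Re<x,y> <= (ab)^2]. *)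
Lemma Re_hdot_le x y : complex.Re (hdot x y) <= hnorm x * hnorm y.
Proof.
have [x0|nx0] := eqVneq (hnorm x) 0; first by rewrite (hnorm_eq0 x0) hdot0l hnorm0 mul0r.
have [y0|ny0] := eqVneq (hnorm y) 0; first by rewrite (hnorm_eq0 y0) hdot0r hnorm0 mulr0.
have xy_gt0 : 0 < hnorm x * hnorm y by rewrite mulr_gt0 // lt_def ?nx0 ?ny0 hnorm_ge0.
have := sqr_ge0 (hnorm ((hnorm y)%:C *: x - (hnorm x)%:C *: y)).
rewrite sqr_hnormD hnormN !hnormZ hdotNr hdotZl hdotZr conjc_real.
rewrite /cabs !csq_real !sqrtr_sqr !ger0_norm ?hnorm_ge0 //.
by move: xy_gt0; case: (hdot x y) => p q /=; nra.
Qed.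

Lemma hnormD x y : hnorm (x + y) <= hnorm x + hnorm y.
Proof.
rewrite -ler_sqr ?nnegrE ?addr_ge0 ?hnorm_ge0 // sqr_hnormD.
by have := Re_hdot_le x y; nra.
Qed.

Lemma hnorm_sum (I : Type) (r : seq I) (F : I -> H) :
  hnorm (\sum_(i <- r) F i) <= \sum_(i <- r) hnorm (F i).
Proof.
elim: r => [|i r IH]; first by rewrite !big_nil hnorm0.
by rewrite !big_cons (le_trans (hnormD _ _)) // lerD.
Qed.

Lemma sqr_hnorm_sum_le (I : Type) (r : seq I) (P : pred I) (F : I -> H) :
  hnorm (\sum_(i <- r | P i) F i) ^+ 2 <=
  ((count P r)%:R : R) * \sum_(i <- r | P i) hnorm (F i) ^+ 2.
Proof.
rewrite -!(big_filter r P) -size_filter; set s := filter P r.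
have Q_ge0 : 0 <= \sum_(i <- s) hnorm (F i) ^+ 2.
  by apply: sumr_ge0 => i _; exact: sqr_ge0.
have CS := sum_mul_le_sqrt _ s (fun=> 1) (fun i => hnorm (F i)).
have E1 : \sum_(i <- s) 1 * hnorm (F i) = \sum_(i <- s) hnorm (F i).
  by apply: eq_bigr => i _; rewrite mul1r.
have E2 : \sum_(i <- s) (1 : R) ^+ 2 = (size s)%:R.
  by rewrite -sum1_size natr_sum; apply: eq_bigr => i _; rewrite expr1n.
rewrite E1 E2 in CS.
rewrite -(sqr_sqrtr Q_ge0) -(sqr_sqrtr (ler0n _ (size s))) -exprMn.
rewrite ler_sqr ?nnegrE ?hnorm_ge0 ?mulr_ge0 ?sqrtr_ge0 //.
exact: le_trans (hnorm_sum _ _ _) CS.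
Qed.

End InnerProductSpace.

Section LinearMaps.
Context {K : pzRingType} {U V : lmodType K} {f : U -> V}.
Hypothesis f_lin : linear f.

Lemma linD x y : f (x + y) = f x + f y.
Proof. by have := f_lin 1 x y; rewrite !scale1r. Qed.

Lemma lin0 : f 0 = 0.
Proof. by apply: (addrI (f 0)); rewrite -linD !addr0. Qed.

Lemma linZ a x : f (a *: x) = a *: f x.
Proof. by have := f_lin a x 0; rewrite !addr0 lin0 addr0. Qed.

Lemma linN x : f (- x) = - f x.
Proof. by rewrite -scaleN1r linZ scaleN1r. Qed.

Lemma linB x y : f (x - y) = f x - f y.
Proof. by rewrite linD linN. Qed.

Lemma lin_sum (I : Type) (r : seq I) (F : I -> U) :
  f (\sum_(i <- r) F i) = \sum_(i <- r) f (F i).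
Proof.
elim: r => [|i r IH]; first by rewrite !big_nil lin0.
by rewrite !big_cons linD IH.
Qed.

End LinearMaps.

Lemma iter_linear {K : pzRingType} {U : lmodType K} {f : U -> U} :
  linear f -> forall k, linear (iter k f).
Proof. by move=> f_lin k a x y; elim: k => //= k ->; exact: f_lin. Qed.

Definition neumann_sum {K : pzRingType} {U : lmodType K} (L : U -> U) n (f : U) : U :=
  \sum_(k < n) iter k L f.

Section NeumannSeries.
Context {R : realType} {M : hilbert R} {L : M -> M} {r : R}.
Hypotheses (L_lin : linear L) (r_ge0 : 0 <= r) (r_lt1 : r < 1).
Hypothesis L_le : forall z, hnorm (L z) <= r * hnorm z.

Lemma hnorm_iter_le k z : hnorm (iter k L z) <= r ^+ k * hnorm z.
Proof.
elim: k => [|k IH]; first by rewrite expr0 mul1r.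
by rewrite iterS exprS -mulrA (le_trans (L_le _)) // ler_wpM2l.
Qed.

Lemma neumann_sum_sub n f : neumann_sum L n f - L (neumann_sum L n f) = f - iter n L f.
Proof.
have := telescope_sumr (fun k => iter k L f) (leq0n n); rewrite big_mkord /= => tele.
rewrite /neumann_sum (lin_sum L_lin) -sumrB -[RHS]opprB -tele -sumrN.
by apply: eq_bigr => k _; rewrite opprB.
Qed.

Lemma neumann_sum_telescope n z : neumann_sum L n (z - L z) = z - iter n L z.
Proof.
rewrite -neumann_sum_sub /neumann_sum (lin_sum L_lin) -sumrB.
by apply: eq_bigr => k _; rewrite (linB (iter_linear L_lin _)) -iterS iterSr.
Qed.

Lemma hnorm_neumann_sumB_le f {n m} : (n <= m)%N ->
  hnorm (neumann_sum L m f - neumann_sum L n f) <= hnorm f / (1 - r) * r ^+ n.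
Proof.
move=> le_nm; have r1_gt0 : 0 < 1 - r by rewrite subr_gt0.
have -> : neumann_sum L m f - neumann_sum L n f = \sum_(n <= k < m) iter k L f.
  rewrite /neumann_sum -!(big_mkord xpredT (fun k => iter k L f)).
  by rewrite (big_cat_nat (leq0n n) le_nm) /= addrAC subrr add0r.
have geom : (1 - r) * \sum_(n <= k < m) r ^+ k = r ^+ n - r ^+ m.
  rewrite mulr_sumr -[RHS]opprB -(telescope_sumr _ le_nm) -sumrN.
  by apply: eq_bigr => k _; rewrite exprS; ring.
rewrite mulrAC ler_pdivlMr //.
apply: le_trans (ler_wpM2r (ltW r1_gt0) (hnorm_sum _ _ _)) _.
apply: le_trans (ler_wpM2r (ltW r1_gt0) (ler_sum _ (fun k _ => hnorm_iter_le k f))) _.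
rewrite -mulr_suml mulrAC [_ * (1 - r)]mulrC geom.
have := hnorm_ge0 f; have : 0 <= r ^+ m by rewrite exprn_ge0.
by nra.
Qed.

Lemma neumann_sum_cauchy f e : 0 < e -> exists N, forall m n, (N <= m)%N -> (N <= n)%N ->
  hnorm (neumann_sum L m f - neumann_sum L n f) < e.
Proof.
move=> e_gt0; have [N smallN] := geometric_eventually (hnorm f / (1 - r)) r_ge0 r_lt1 e_gt0.
exists N => m n leNm leNn.
wlog le_nm : m n leNm leNn / (n <= m)%N => [wlog_le|].
  have [|/ltnW le_mn] := leqP n m; first exact: wlog_le.
  by rewrite hnormB; exact: wlog_le.
exact: le_lt_trans (hnorm_neumann_sumB_le f le_nm) (smallN n leNn).
Qed.

Lemma neumann_solution f : exists z, z - L z = f.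
Proof.
have [z lim_z] := hcomplete (neumann_sum_cauchy f).
exists z; apply/eqP; rewrite -subr_eq0; apply/eqP/hnorm_eq0/eqP.
rewrite eq_le hnorm_ge0 andbT; apply/ler_addgt0Pr => e e_gt0; rewrite add0r.
have e3_gt0 : 0 < e / 3 by rewrite divr_gt0.
have [N1 near_z] := lim_z _ e3_gt0.
have [N2 small_tail] := geometric_eventually (hnorm f) r_ge0 r_lt1 e3_gt0.
pose n := maxn N1 N2; pose S := neumann_sum L n f.
have Sz : hnorm (S - z) < e / 3 := near_z n (leq_maxl _ _).
have tail : hnorm f * r ^+ n < e / 3 := small_tail n (leq_maxr _ _).
(* [S - L S = f - L^n f], so the defect of [z] is controlled by [|z - S|] and [|L^n f|]. *)
have -> : z - L z - f = (z - S) - L (z - S) - iter n L f.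
  rewrite (linB L_lin) opprD opprK addrACA (addrC (- S)) -(opprB S).
  by rewrite neumann_sum_sub -[RHS]addrA -opprD subrK.
apply: le_trans (hnormD _ _) _; rewrite hnormN.
apply: le_trans (lerD (hnormD _ _) (hnorm_iter_le n f)) _.
rewrite hnormN; rewrite hnormB in Sz; rewrite mulrC in tail.
have := L_le (z - S); have := ler_piMl (hnorm_ge0 (z - S)) (ltW r_lt1).
lra.
Qed.

End NeumannSeries.

Definition lam_op {R : realType} {d : nat} {M : hilbert R}
    (T : 'I_d -> M -> M) (lam : cpoint R d) (z : M) : M :=
  \sum_(j < d) lam j *: T j z.

Definition cnorm {R : realType} {d : nat} (lam : cpoint R d) : R :=
  Num.sqrt (\sum_(j < d) csq (lam j)).

Definition row_contraction {R : realType} {d : nat} {M : hilbert R}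
    (T : 'I_d -> M -> M) : Prop :=
  forall z, \sum_(j < d) hnorm (T j z) ^+ 2 <= hnorm z ^+ 2.

Section RowOperator.
Context {R : realType} {d : nat} {M : hilbert R} {T : 'I_d -> M -> M}.
Implicit Type lam : cpoint R d.

Lemma lam_op_linear lam : (forall j, linear (T j)) -> linear (lam_op T lam).
Proof.
move=> T_lin a x y; rewrite /lam_op scaler_sumr -big_split /=; apply: eq_bigr => j _.
by rewrite T_lin scalerDr !scalerA mulrC.
Qed.

Lemma cnorm_ge0 lam : 0 <= cnorm lam.
Proof. exact: sqrtr_ge0. Qed.

Lemma cnorm_lt1 {lam} : in_ball lam -> cnorm lam < 1.
Proof. by move=> lam_ball; rewrite -sqrtr1 ltr_sqrt ?ltr01. Qed.

Lemma hnorm_lam_op_le lam z : row_contraction T ->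
  hnorm (lam_op T lam z) <= cnorm lam * hnorm z.
Proof.
move=> T_contr; rewrite /lam_op; apply: le_trans (hnorm_sum _ _ _) _.
under eq_bigr do rewrite hnormZ.
apply: le_trans (sum_mul_le_sqrt _ _ _ _) _.
under eq_bigr do rewrite sqr_cabs.
rewrite ler_wpM2l ?cnorm_ge0 // -ler_sqr ?nnegrE ?sqrtr_ge0 ?hnorm_ge0 //.
by rewrite sqr_sqrtr ?T_contr // sumr_ge0 // => j _; exact: sqr_ge0.
Qed.

Lemma lam_op_resolvent_exists {lam} f : (forall j, linear (T j)) -> row_contraction T ->
  in_ball lam -> exists z, z - lam_op T lam z = f.
Proof.
move=> T_lin T_contr lam_ball; apply: (neumann_solution (lam_op_linear lam T_lin) (cnorm_ge0 lam)
  (cnorm_lt1 lam_ball)) => z; exact: hnorm_lam_op_le.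
Qed.

End RowOperator.

Section Words.
Context {d : nat}.
Implicit Types (w : seq 'I_d) (n : mindex d).

Fixpoint words k : seq (seq 'I_d) :=
  if k is k'.+1 then [seq j :: w | j <- index_enum 'I_d, w <- words k'] else [:: [::]].

Lemma big_words_S (V : nmodType) k (F : seq 'I_d -> V) :
  \sum_(w <- words k.+1) F w = \sum_(j < d) \sum_(w <- words k) F (j :: w).
Proof. exact: big_allpairs_dep. Qed.

Lemma size_words k w : w \in words k -> size w = k.
Proof.
elim: k w => [|k IH] w; first by rewrite inE => /eqP->.
by case/allpairsPdep => j [w' [_ /IH <- ->]].
Qed.

Definition abel w : mindex d := fun i => count_mem i w.

Definition abel_eq w n : bool := [forall i, abel w i == n i].

Lemma mabs_abel w : mabs (abel w) = size w.
Proof.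
rewrite /mabs /abel; elim: w => [|j w IH] /=; first by rewrite big1.
rewrite big_split /= IH (bigD1 j) //= eqxx big1 ?add1n // => i.
by rewrite eq_sym => /negbTE ->.
Qed.

Lemma abel_eq_mabs {w n} : abel_eq w n -> mabs n = size w.
Proof.
by move/forallP => wn; rewrite -mabs_abel; apply: eq_bigr => i _; exact/esym/eqP/wn.
Qed.

Definition mdec n j : mindex d := fun i => (n i - (i == j))%N.

Lemma abel_eq_cons j w n : abel_eq (j :: w) n = (0 < n j)%N && abel_eq w (mdec n j).
Proof.
apply/forallP/andP => [wn|[nj_gt0 /forallP wn] i].
  have wn' i : ((j == i) + count_mem i w)%N = n i by exact: eqP (wn i).
  split; first by rewrite -wn' eqxx.
  by apply/forallP => i; rewrite /mdec -wn' (eq_sym i j) addKn.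
rewrite /= (eqP (wn i)) /mdec.
by case: (eqVneq j i) => [<-|_] /=; rewrite ?add1n ?subn1 ?prednK ?add0n ?subn0.
Qed.

Lemma mfact_mdec {n j} : (0 < n j)%N -> mfact n = (n j * mfact (mdec n j))%N.
Proof.
move=> nj_gt0; rewrite /mfact (bigD1 j) //= [in RHS](bigD1 j) //= /mdec eqxx mulnA.
rewrite -{1}(prednK nj_gt0) factS prednK // subn1; congr (_ * _)%N.
by apply: eq_bigr => i /negbTE ->; rewrite subn0.
Qed.

Lemma mabs_mdec {n j} : (0 < n j)%N -> mabs n = (mabs (mdec n j)).+1.
Proof.
move=> nj_gt0; rewrite /mabs (bigD1 j) //= [in RHS](bigD1 j) //= /mdec eqxx.
rewrite [in RHS](eq_bigr n) => [|i /negbTE ->]; last by rewrite subn0.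
by rewrite -addSn subn1 prednK.
Qed.

Lemma count_abel_eq_mfact {k n} : mabs n = k ->
  (count (abel_eq^~ n) (words k) * mfact n = k`!)%N.
Proof.
elim: k n => [|k IH] n.
  move/eqP; rewrite /mabs sum_nat_eq0 => /forallP n0.
  have nE i : n i = 0%N by exact/eqP/n0.
  have n_abel_nil : abel_eq [::] n by apply/forallP => i; rewrite nE.
  by rewrite /= n_abel_nil /mfact big1 // => i _; rewrite nE.
move=> nk; rewrite -sum1_count big_mkcond big_words_S big_distrl /=.
have -> : k.+1`! = (\sum_(j < d) k`! * n j)%N.
  by rewrite -big_distrr /= -/(mabs n) nk factS mulnC.
apply: eq_bigr => j _; have [nj0|nj_gt0] := posnP (n j).
  by rewrite big1 ?mul0n ?nj0 ?muln0 // => w _; rewrite abel_eq_cons nj0.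
under eq_bigr do rewrite abel_eq_cons nj_gt0 /=.
rewrite -big_mkcond sum1_count (mfact_mdec nj_gt0) mulnCA IH 1?mulnC //.
by move: nk; rewrite (mabs_mdec nj_gt0) => -[].
Qed.

Lemma sum_deg_le_abel_eq (V : nmodType) N w (x : V) : (size w <= N)%N ->
  sum_deg_le N (fun n => if abel_eq w n then x else 0) = x.
Proof.
move=> wN; pose m0 : {ffun 'I_d -> 'I_N.+1} := [ffun k => inord (abel w k)].
have m0E k : (m0 k : nat) = abel w k.
  by rewrite ffunE inordK // ltnS (leq_trans (count_size _ _) wN).
have w_m0 : abel_eq w (fun k => m0 k : nat) by apply/forallP => k; rewrite m0E.
have m0_deg : (\sum_(k < d) (m0 k : nat) <= N)%N.
  by have := abel_eq_mabs w_m0; rewrite /mabs => ->.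
rewrite /sum_deg_le (bigD1 m0) //= w_m0 big1 ?addr0 // => m /andP[_ m_neq].
case: ifP => // /forallP wm; case/eqP: m_neq; apply/ffunP => k; apply/val_inj.
by rewrite /= m0E; exact/esym/eqP/wm.
Qed.

Lemma sum_deg_le_words (V : nmodType) N (F : seq 'I_d -> V) :
  sum_deg_le N (fun n => \sum_(w <- words (mabs n) | abel_eq w n) F w) =
  \sum_(k < N.+1) \sum_(w <- words k) F w.
Proof.
symmetry; transitivity (\sum_(k < N.+1) \sum_(w <- words k)
    sum_deg_le N (fun n => if abel_eq w n then F w else 0)).
  apply: eq_bigr => k _; apply: eq_big_seq => w /size_words wk.
  by rewrite sum_deg_le_abel_eq // wk -ltnS.
rewrite /sum_deg_le; under eq_bigr do rewrite exchange_big.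
rewrite exchange_big; apply: eq_bigr => m m_deg /=.
set n := fun k => nat_of_ord (m k).
rewrite (bigD1 (inord (mabs n))) ?inordK ?ltnS //= [in RHS]big_mkcond.
rewrite [X in _ + X]big1 ?addr0 // => k k_neq.
apply: big1_seq => w /size_words wk; case: ifP => // /abel_eq_mabs.
by rewrite wk => nk; case/eqP: k_neq; apply/val_inj; rewrite /= nk inordK.
Qed.

End Words.

Section Monomials.
Context {R : realType} {d : nat}.
Implicit Types (lam : cpoint R d) (w : seq 'I_d).

Lemma mpow_abel_nil lam : mpow lam (abel [::]) = 1.
Proof. by rewrite /mpow big1 // => i _; rewrite expr0. Qed.

Lemma mpow_abel_cons lam j w : mpow lam (abel (j :: w)) = lam j * mpow lam (abel w).
Proof.
rewrite /mpow /abel /=; under eq_bigr do rewrite exprD.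
rewrite big_split /= (bigD1 j) //= eqxx expr1 big1 ?mulr1 // => i.
by rewrite eq_sym => /negbTE ->; rewrite expr0.
Qed.

Lemma mpow_abel_eq lam w n : abel_eq w n -> mpow lam (abel w) = mpow lam n.
Proof. by move/forallP => wn; apply: eq_bigr => i _; rewrite (eqP (wn i)). Qed.

End Monomials.

Lemma in_ball0 {R : realType} {d : nat} : in_ball (@cpoint0 R d).
Proof. by rewrite /in_ball big1 ?ltr01 // => j _; rewrite /csq /cpoint0 mul0r. Qed.

Section BackwardShift.
Context {R : realType} {d : nat} {Y M : hilbert R} {ev : M -> cpoint R d -> Y}.
Context {T : 'I_d -> M -> M}.
Hypothesis ev_fun : function_space ev.
Hypothesis T_bdd : forall j, bounded_linear (T j).
Hypothesis ev_rec : forall f lam, in_ball lam ->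
  ev f lam - ev f cpoint0 = \sum_(j < d) lam j *: ev (T j f) lam.
Hypothesis T_contr0 : forall f,
  \sum_(j < d) hnorm (T j f) ^+ 2 <= hnorm f ^+ 2 - hnorm (ev f cpoint0) ^+ 2.

Definition ev_at0 (f : M) : Y := ev f cpoint0.

Lemma ev_linear {lam} : in_ball lam -> linear (ev^~ lam).
Proof. by move=> lam_ball a f g; exact: ev_fun.1. Qed.

Lemma ev_at0_linear : linear ev_at0.
Proof. exact: ev_linear in_ball0. Qed.

Lemma T_linear j : linear (T j).
Proof. exact: (T_bdd j).1. Qed.

Lemma T_row_contraction : row_contraction T.
Proof. by move=> f; have := T_contr0 f; have := sqr_ge0 (hnorm (ev_at0 f)); lra. Qed.

Lemma hnorm_ev_at0_le f : hnorm (ev_at0 f) <= hnorm f.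
Proof.
rewrite -ler_sqr ?nnegrE ?hnorm_ge0 //.
have := T_contr0 f; have : 0 <= \sum_(j < d) hnorm (T j f) ^+ 2.
  by apply: sumr_ge0 => j _; exact: sqr_ge0.
rewrite /ev_at0; lra.
Qed.

Lemma ev_at0_resolvent {lam z f} : in_ball lam ->
  z - lam_op T lam z = f -> ev_at0 z = ev f lam.
Proof.
move=> lam_ball <-; rewrite (linB (ev_linear lam_ball)) /lam_op.
rewrite (lin_sum (ev_linear lam_ball)).
under eq_bigr do rewrite (linZ (ev_linear lam_ball)).
by rewrite -(ev_rec z lam lam_ball) opprB addrC subrK.
Qed.

Lemma ev_at0_resolvent_eq lam f : in_ball lam -> ev_at0 (resolvent T lam f) = ev f lam.
Proof.
move=> lam_ball; apply: (ev_at0_resolvent lam_ball).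
have [z zE] := lam_op_resolvent_exists f T_linear T_row_contraction lam_ball.
exact: (@xgetPex _ 0 [set z | z - lam_op T lam z = f] (ex_intro _ z zE)).
Qed.

Lemma kerO_eq0 k : kerO ev_at0 T k -> k = 0.
Proof.
move=> k_ker; apply: ev_fun.2 => lam lam_ball.
by rewrite (lin0 (ev_linear lam_ball)) -ev_at0_resolvent_eq //; exact: k_ker.
Qed.

Lemma projQ_id x : projQ ev_at0 T x = x.
Proof.
rewrite /projQ /proj_perp; apply: xget_unique.
  split=> [k /kerO_eq0 ->|]; first by rewrite hdot0r.
  by rewrite subrr => lam lam_ball; rewrite /obsO ev_at0_resolvent_eq // (lin0 (ev_linear lam_ball)).
by move=> y [_ /kerO_eq0 /eqP]; rewrite subr_eq0 => /eqP.
Qed.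

Lemma realization : exists (X : hilbert R) (C : X -> Y) (A : 'I_d -> X -> X),
  bounded_linear C /\ (forall j, bounded_linear (A j)) /\
  contractive_pair C A /\ isometrically_equal_HK ev C A.
Proof.
have obsO_ev f lam : in_ball lam -> ev f lam = obsO ev_at0 T f lam.
  by move=> lam_ball; rewrite /obsO ev_at0_resolvent_eq.
exists M, ev_at0, T; split; [|split; [exact: T_bdd|split]].
- split; first exact: ev_at0_linear.
  by exists 1 => f; rewrite mul1r hnorm_ev_at0_le.
- by move=> f; have := T_contr0 f; rewrite /ev_at0; lra.
- split; [|split].
  + by move=> f; exists f => lam; exact: obsO_ev.
  + by move=> x; exists x => lam; exact: obsO_ev.
  + move=> f x fx; rewrite projQ_id; congr hnorm; apply: ev_fun.2 => lam lam_ball.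
    by rewrite fx // -obsO_ev.
Qed.

(* [word_op [:: i1; ...; iN]] is T_iN ... T_i1, the paper's T^v. *)
Definition word_op (w : seq 'I_d) (f : M) : M := foldl (fun g j => T j g) f w.

Definition coef (f : M) (n : mindex d) : Y :=
  \sum_(w <- words (mabs n) | abel_eq w n) ev_at0 (word_op w f).

Lemma word_op_linear w : linear (word_op w).
Proof. by elim: w => [|j w IH] a x y //=; rewrite T_linear IH. Qed.

Lemma iter_lam_op_words lam k f :
  iter k (lam_op T lam) f = \sum_(w <- words k) mpow lam (abel w) *: word_op w f.
Proof.
elim: k f => [|k IH] f; first by rewrite /= big_seq1 mpow_abel_nil scale1r.
rewrite iterSr IH big_words_S.
have -> : \sum_(w <- words k) mpow lam (abel w) *: word_op w (lam_op T lam f) =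
    \sum_(w <- words k) \sum_(j < d) (lam j * mpow lam (abel w)) *: word_op w (T j f).
  apply: eq_bigr => w _; rewrite /lam_op (lin_sum (word_op_linear w)) scaler_sumr.
  by apply: eq_bigr => j _; rewrite (linZ (word_op_linear w)) scalerA mulrC.
by rewrite exchange_big; apply: eq_bigr => j _; apply: eq_bigr => w _; rewrite mpow_abel_cons.
Qed.

Lemma sum_deg_le_mpow_coef lam f N :
  sum_deg_le N (fun n => mpow lam n *: coef f n) =
  ev_at0 (neumann_sum (lam_op T lam) N.+1 f).
Proof.
transitivity (sum_deg_le N (fun n => \sum_(w <- words (mabs n) | abel_eq w n)
    mpow lam (abel w) *: ev_at0 (word_op w f))).
  rewrite /sum_deg_le; apply: eq_bigr => m _; rewrite /coef scaler_sumr.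
  by apply: eq_bigr => w /(mpow_abel_eq lam) ->.
rewrite sum_deg_le_words /neumann_sum (lin_sum ev_at0_linear); apply: eq_bigr => k _.
rewrite iter_lam_op_words (lin_sum ev_at0_linear).
by apply: eq_bigr => w _; rewrite (linZ ev_at0_linear).
Qed.

Lemma power_series_coef lam f : in_ball lam -> power_series_at (coef f) lam (ev f lam).
Proof.
move=> lam_ball e e_gt0.
have [z zE] := lam_op_resolvent_exists f T_linear T_row_contraction lam_ball.
have [N smallN] := geometric_eventually (hnorm z) (cnorm_ge0 lam) (cnorm_lt1 lam_ball) e_gt0.
exists N => n leNn; rewrite sum_deg_le_mpow_coef -(ev_at0_resolvent lam_ball zE) -zE.
rewrite (neumann_sum_telescope (lam_op_linear lam T_linear)) -(linB ev_at0_linear) subKr.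
apply: le_lt_trans (hnorm_ev_at0_le _) _.
have L_le z' := hnorm_lam_op_le lam z' T_row_contraction.
apply: le_lt_trans (hnorm_iter_le (cnorm_ge0 lam) L_le _ _) _.
by rewrite mulrC; exact: smallN (leqW leNn).
Qed.

Lemma coef_sqr_le f n :
  (mfact n)%:R / ((mabs n)`!)%:R * hnorm (coef f n) ^+ 2 <=
  \sum_(w <- words (mabs n) | abel_eq w n) hnorm (ev_at0 (word_op w f)) ^+ 2.
Proof.
have fact_gt0 : 0 < ((mabs n)`!)%:R :> R by rewrite ltr0n fact_gt0.
rewrite mulrAC ler_pdivrMr // -(count_abel_eq_mfact (erefl (mabs n))) natrM.
have := sqr_hnorm_sum_le _ (words (mabs n)) (abel_eq^~ n) (fun w => ev_at0 (word_op w f)).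
have : 0 <= (mfact n)%:R :> R by [].
by nra.
Qed.

Lemma sum_words_sqr_le N f :
  \sum_(k < N) \sum_(w <- words k) hnorm (ev_at0 (word_op w f)) ^+ 2 <= hnorm f ^+ 2.
Proof.
elim: N f => [|N IH] f; first by rewrite big_ord0 sqr_ge0.
rewrite big_ord_recl /= big_seq1.
under eq_bigr do rewrite big_words_S.
rewrite exchange_big /=.
apply: le_trans (lerD (lexx _) (ler_sum _ (fun j _ => IH (T j f)))) _.
by have := T_contr0 f; rewrite /ev_at0; lra.
Qed.

Lemma contractive_inclusion : contractively_included_arveson ev.
Proof.
move=> f; exists (coef f); split=> [lam|N]; first exact: power_series_coef.
apply: le_trans (_ : _ <= sum_deg_le N (fun n => \sum_(w <- words (mabs n) | abel_eq w n)
    hnorm (ev_at0 (word_op w f)) ^+ 2)) _.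
  by rewrite /arveson_partial /sum_deg_le; apply: ler_sum => m _; exact: coef_sqr_le.
by rewrite sum_deg_le_words; exact: sum_words_sqr_le.
Qed.

End BackwardShift.

Theorem theorem3p21 (R : realType) (d : nat) (Y M : hilbert R)
    (ev : M -> cpoint R d -> Y)
    (Hfun : function_space ev)
    (T : 'I_d -> M -> M)
    (HT : forall j, bounded_linear (T j))
    (Hrec : forall (f : M) (lam : cpoint R d), in_ball lam ->
        ev f lam - ev f cpoint0 = \sum_(j < d) (lam j *: ev (T j f) lam))
    (Hcontr : forall f : M,
        \sum_(j < d) hnorm (T j f) ^+ 2 <= hnorm f ^+ 2 - hnorm (ev f cpoint0) ^+ 2) :
  (exists (X : hilbert R) (C : X -> Y) (A : 'I_d -> X -> X),
      bounded_linear C /\ (forall j, bounded_linear (A j)) /\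
      contractive_pair C A /\ isometrically_equal_HK ev C A) /\
  contractively_included_arveson ev.
Proof.
split; first exact: (realization Hfun HT Hrec Hcontr).
exact: (contractive_inclusion Hfun HT Hrec Hcontr).
Qed.
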